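(* Let $q\geq 3$, $n\ge 2$, $1\leq r\leq n$, and let $U$ be the set of all $n\times n$ hermitian matrices over $\mathbb{F}_{q^2}$ of rank $r$. Let $\Phi:U\to U$ be a bijection that preserves adjacency in both directions, i.e. $\operatorname{rank}(A-B)=1\iff\operatorname{rank}(\Phi(A)-\Phi(B))=1$ for all $A,B\in U$. If $\mathcal{L}\subseteq U$ is a leaf of some hermitian matrix of rank $r-1$, then $\Phi(\mathcal{L})$ is a leaf of some unique hermitian matrix of rank $r-1$.
   Context: $\mathbb{F}_{q^2}$ is the field with $q^2$ elements with involution $\bar x=x^q$, fixed field $\mathbb{F}_q$; $X^\ast=\bar X^\top$; $A$ is hermitian if $A^\ast=A$. Leaf: if $A$ is an $n\times n$ hermitian matrix of rank $s<n$ and $\mathbf{x}\in\mathbb{F}_{q^2}^n$ does not lie in the column space of $A$, then the set $\{A+\lambda\mathbf{x}\mathbf{x}^\ast:\ 0\neq\lambda\in\mathbb{F}_q\}$ (which consists of $q-1$ pairwise adjacent matrices of rank $s+1$) is called a leaf of $A$. Two hermitian matrices are adjacent if their difference has rank one. *)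

From HB Require Import structures.
From mathcomp Require Import all_boot all_order all_algebra.
Unset Strict Implicit. Unset Printing Implicit Defensive.
Import GRing.Theory.
Local Open Scope ring_scope.

(* F plays the role of F_{q^2}; the involution is x |-> x^q. *)
Definition conjq {F : finFieldType} (q : nat) (x : F) : F := x ^+ q.

Definition mxstar {F : finFieldType} (q : nat) {m k : nat} (X : 'M[F]_(m, k))
  : 'M[F]_(k, m) := (map_mx (conjq q) X)^T.

Definition is_herm {F : finFieldType} (q : nat) {n : nat} (A : 'M[F]_n) : bool :=
  mxstar q A == A.

Definition hermU {F : finFieldType} (q n r : nat) : {set 'M[F]_n} :=
  [set A : 'M[F]_n | is_herm q A && (\rank A == r)].

Definition adjacent {F : finFieldType} {n : nat} (A B : 'M[F]_n) : bool :=
  \rank (A - B) == 1%N.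

Definition fixedq {F : finFieldType} (q : nat) : {set F} :=
  [set x : F | conjq q x == x].

Definition in_colspace {F : finFieldType} {n : nat} (A : 'M[F]_n) (x : 'cV[F]_n) : Prop :=
  exists y : 'cV[F]_n, x = A *m y.

Definition leaf_set {F : finFieldType} (q : nat) {n : nat} (A : 'M[F]_n) (x : 'cV[F]_n)
  : {set 'M[F]_n} :=
  [set A + l *: (x *m mxstar q x) | l in fixedq q :\ 0].

Definition is_leaf {F : finFieldType} (q : nat) {n : nat} (L : {set 'M[F]_n}) (A : 'M[F]_n) : Prop :=
  is_herm q A /\ (\rank A < n)%N /\
  exists x : 'cV[F]_n, ~ in_colspace A x /\ L = leaf_set q A x.

From HB Require Import structures.
From mathcomp Require Import all_boot all_order all_algebra all_field.
From mathcomp Require Import zify.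
Set Implicit Arguments. Unset Strict Implicit. Unset Printing Implicit Defensive.
Import GRing.Theory.
Local Open Scope ring_scope.

(* Phi maps the leaf L = {A + l x x^* : 0 <> l in F_q}, a family of q - 1 pairwise adjacent
   hermitian matrices of rank r, onto another such family.  Rank-one hermitian matrices have
   the form l y y^* with l in F_q, and l y y^* - m z z^* has rank at most one only when
   z z^* is an F_q-multiple of y y^*; hence a hermitian matrix adjacent to two points N1, N2
   of the family lies on the F_q-line through N1 in direction N2 - N1.  So Phi(L) fills all
   but one point E of a line of q points, i.e. Phi(L) is the leaf of E in some direction y.
   The rank of E is r - 1 or r or r + 1.  It is not r + 1, because at most one point
   E + l y y^* of the line can have rank below that of E (E being hermitian).  It is not r,
   because a preimage of E would be adjacent to every point of L, hence would lie on the
   line of L, whose only points are A (of rank r - 1) and L itself.  Finally, a leaf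
   determines its base, which gives uniqueness. *)

Lemma conjq_additive (F : finFieldType) (q : nat) : #|F| = (q ^ 2)%N ->
  {morph conjq (F := F) q : x y / x + y}.
Proof.
move=> hF x y; have [p p_pr pcharFp] := finPcharP F.
have : (q %| p ^ logn p #|F|)%N by rewrite -(card_pprimeChar pcharFp) hF dvdn_exp.
case/(dvdn_pfactor _ _ p_pr) => m _ ->.
by apply: exprDn_pchar; rewrite pnatX (pnatE _ p_pr) pcharFp.
Qed.

Lemma conjq_involutive (F : finFieldType) (q : nat) : #|F| = (q ^ 2)%N ->
  involutive (conjq (F := F) q).
Proof. by move=> hF x; rewrite /conjq -exprM -[(q * q)%N]/(q ^ 2)%N -hF expf_card. Qed.

Lemma fixedq_card_gt2 (F : finFieldType) (q : nat) : (3 <= q)%N -> #|F| = (q ^ 2)%N ->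
  (2 < #|fixedq (F := F) q|)%N.
Proof.
move=> hq hF; rewrite ltnNge; apply/negP => small.
have fixed0 : (0 : F) \in fixedq q by rewrite inE /conjq expr0n; case: (q) hq.
have fixed1 : (1 : F) \in fixedq q by rewrite inE /conjq expr1n.
have fixed01 (c : F) : c \in fixedq q -> c = 0 \/ c = 1.
  move=> fixedc; have [->|c0] := eqVneq c 0; first by left.
  have [->|c1] := eqVneq c 1; first by right.
  move: small; rewrite (cardD1 0) fixed0 (cardD1 1) !inE oner_eq0.
  move: fixed1; rewrite inE => ->; rewrite (cardD1 c) !inE c0 c1.
  by move: fixedc; rewrite inE => ->.
(* Otherwise the norm x^(q+1), being fixed, would be 1 for all q^2 - 1 nonzero x. *)
have norm1 (x : F) : x != 0 -> x ^+ q.+1 = 1.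
  move=> x0; have : x ^+ q.+1 \in fixedq q.
    by rewrite inE /conjq -exprM mulSn exprD -[(q * q)%N]/(q ^ 2)%N -hF expf_card -exprSr.
  by case/fixed01 => // /eqP; rewrite expf_eq0 (negbTE x0) andbF.
have := @max_unity_roots F q.+1 (enum (predC1 0)) (ltn0Sn _).
rewrite enum_uniq -cardE cardC1 hF => /(_ _ isT).
have -> : all (root_of_unity q.+1) (enum (predC1 (0 : F))).
  by apply/allP => x; rewrite mem_enum => x0; rewrite unity_rootE norm1.
move=> /(_ isT); have : (3 * q <= q * q)%N by rewrite leq_mul2r hq orbT.
rewrite -[(q ^ 2)%N]/(q * q)%N; lia.
Qed.

Lemma two_nonzero (F : finFieldType) (S : {set F}) : (2 < #|S|)%N ->
  exists a b, [/\ a \in S, b \in S, a != 0, b != 0 & a != b].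
Proof.
move=> S_gt2; have S0_gt1 : (1 < #|S :\ 0%R|)%N.
  move: S_gt2; rewrite (cardsD1 0%R S); set k := #|_ :\ _|; case: (_ \in _) => /=; lia.
have /card_gt0P [a Sa] : (0 < #|S :\ 0%R|)%N by apply: ltnW.
have /card_gt0P [b Sb] : (0 < #|S :\ 0%R :\ a|)%N by move: S0_gt1; rewrite (cardsD1 a) Sa.
move: Sa Sb; rewrite !inE => /andP [a0 Sa] /and3P [ba b0 Sb].
by exists a, b; split; rewrite // eq_sym.
Qed.

Lemma sub_add_scale (R : pzRingType) (V : lmodType R) (P Y : V) a b :
  (P + a *: Y) - (P + b *: Y) = (a - b) *: Y.
Proof. by rewrite opprD addrACA subrr add0r scalerBl. Qed.

Lemma subset_card_setD1 (T : finType) (K S : {set T}) :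
  K \subset S -> #|S| = #|K|.+1 -> exists2 E, E \in S & K = S :\ E.
Proof.
move=> KS cardS; have /cards1P [E SKE] : #|S :\: K| == 1%N.
  by rewrite cardsD (setIidPr KS) cardS subSnn.
have /setDP [SE KE] : E \in S :\: K by rewrite SKE set11.
exists E => //; apply/setP => M; rewrite in_setD1.
have [->|ME] := eqVneq M E; first exact/negbTE.
apply/idP/idP => [/(subsetP KS)//|SM]; apply: contraT => KM.
have : M \in S :\: K by rewrite inE KM.
by rewrite SKE inE (negbTE ME).
Qed.

Section RankOne.
Variable R : fieldType.

Lemma mxrank_le1_minor m n (M : 'M[R]_(m, n)) : (\rank M <= 1)%N ->
  forall i j k l, M i j * M k l = M i l * M k j.
Proof.
move=> rkM i j k l; have [/rowP rowk0|rowk_neq0] := eqVneq (row k M) 0.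
  by move: (rowk0 j) (rowk0 l); rewrite !mxE => -> ->; rewrite !mulr0.
have rk_rowk : \rank (row k M) = 1%N by rewrite rank_rV rowk_neq0.
have /mxrank_leqif_sup/leqifP : (row k M <= M)%MS by exact: row_sub.
rewrite rk_rowk; case: ifP => [Msub _|_]; last by rewrite ltnNge rkM.
have /submxP [D rowiE] := submx_trans (row_sub i M) Msub.
have Mi t : M i t = D 0 0 * M k t.
  by have := congr1 (fun X : 'rV_n => X 0 t) rowiE; rewrite !mxE big_ord1 mxE.
by rewrite !Mi mulrAC.
Qed.

Lemma mxrank_le1_scale n (x y : 'cV[R]_n) : (\rank (row_mx x y) <= 1)%N -> x != 0 ->
  exists c, y = c *: x.
Proof.
move=> rkxy /cV0Pn [k xk0]; exists (y k 0 / x k 0); apply/colP => i; rewrite mxE.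
have := mxrank_le1_minor rkxy i (lshift 1 0) k (rshift 1 0).
by rewrite !(row_mxEl, row_mxEr) mulrAC [y k 0 * _]mulrC => ->; rewrite mulfK.
Qed.

Lemma mxrank_le_addB m n (A B : 'M[R]_(m, n)) : (\rank A <= \rank B + \rank (A - B)%R)%N.
Proof. by rewrite -{1}(addrNK B A) addrC mxrank_add. Qed.

Lemma mxrank_add_colspace m n (E : 'M[R]_(m, n)) (w : 'cV[R]_n) (v : 'rV[R]_n) :
  (\rank (E + E *m w *m v)%R <= \rank E)%N.
Proof.
rewrite -{1}[E]mulmx1 -mulmxA -mulmxDr; exact: mxrankM_maxl.
Qed.

Lemma rank_drop_witness m n (E : 'M[R]_(m, n)) (y : 'cV[R]_m) (w : 'rV[R]_n) :
  (\rank (E + y *m w)%R < \rank E)%N ->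
  exists u : 'rV[R]_m, u *m (E + y *m w) = 0 /\ (u *m y) 0 0 != 0.
Proof.
set P := E + y *m w => rk_drop.
have [Ky0|/cV0Pn [i Kyi]] := eqVneq (kermx P *m y) 0; last first.
  by exists (row i (kermx P)); rewrite -!row_mul mulmx_ker row0 mxE.
have : (kermx P <= kermx E)%MS.
  by rewrite sub_kermx -[E](addrK (y *m w)) mulmxBr mulmx_ker mulmxA Ky0 mul0mx subrr.
move/mxrankS; rewrite !mxrank_ker; have := rank_leq_row E; lia.
Qed.

End RankOne.

Section Hermitian.
Variables (F : finFieldType) (q : nat).
Hypothesis conjqD : {morph conjq (F := F) q : x y / x + y}.
Hypothesis conjqK : involutive (conjq (F := F) q).

Lemma conjq0 : conjq q (0 : F) = 0.
Proof. by apply: (addrI (conjq q (0 : F))); rewrite -conjqD !addr0. Qed.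

HB.instance Definition _ := GRing.isNmodMorphism.Build F F (conjq q) (conjq0, conjqD).
HB.instance Definition _ := GRing.isMonoidMorphism.Build F F (conjq q)
  (expr1n F q, exprMn q).

Lemma mxstarE m n (X : 'M[F]_(m, n)) i j : mxstar q X i j = conjq q (X j i).
Proof. by rewrite !mxE. Qed.

Lemma mxstarK m n (X : 'M[F]_(m, n)) : mxstar q (mxstar q X) = X.
Proof. by apply/matrixP => i j; rewrite !mxstarE conjqK. Qed.

Lemma mxstarD m n (X Y : 'M[F]_(m, n)) : mxstar q (X + Y) = mxstar q X + mxstar q Y.
Proof. by rewrite /mxstar map_mxD linearD. Qed.

Lemma mxstarN m n (X : 'M[F]_(m, n)) : mxstar q (- X) = - mxstar q X.
Proof. by rewrite /mxstar map_mxN linearN. Qed.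

Lemma mxstarB m n (X Y : 'M[F]_(m, n)) : mxstar q (X - Y) = mxstar q X - mxstar q Y.
Proof. by rewrite mxstarD mxstarN. Qed.

Lemma mxstarZ m n c (X : 'M[F]_(m, n)) : mxstar q (c *: X) = conjq q c *: mxstar q X.
Proof. by rewrite /mxstar map_mxZ linearZ. Qed.

Lemma mxstarM m n p (X : 'M[F]_(m, n)) (Y : 'M[F]_(n, p)) :
  mxstar q (X *m Y) = mxstar q Y *m mxstar q X.
Proof. by rewrite /mxstar map_mxM trmx_mul. Qed.

Lemma mxrank_star m n (X : 'M[F]_(m, n)) : \rank (mxstar q X) = \rank X.
Proof. by rewrite mxrank_tr mxrank_map. Qed.

Lemma conjq_eq0 (x : F) : (conjq q x == 0) = (x == 0).
Proof. exact: fmorph_eq0. Qed.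

Lemma fixedqP (x : F) : reflect (conjq q x = x) (x \in fixedq q).
Proof. by rewrite inE; apply: eqP. Qed.

Lemma fixedq0 : (0 : F) \in fixedq q. Proof. by apply/fixedqP; rewrite rmorph0. Qed.
Lemma fixedqB (a b : F) : a \in fixedq q -> b \in fixedq q -> a - b \in fixedq q.
Proof. by move=> /fixedqP ha /fixedqP hb; apply/fixedqP; rewrite rmorphB /= ha hb. Qed.
Lemma fixedqD (a b : F) : a \in fixedq q -> b \in fixedq q -> a + b \in fixedq q.
Proof. by move=> /fixedqP ha /fixedqP hb; apply/fixedqP; rewrite rmorphD /= ha hb. Qed.
Lemma fixedqM (a b : F) : a \in fixedq q -> b \in fixedq q -> a * b \in fixedq q.
Proof. by move=> /fixedqP ha /fixedqP hb; apply/fixedqP; rewrite rmorphM /= ha hb. Qed.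
Lemma fixedqV (a : F) : a \in fixedq q -> a^-1 \in fixedq q.
Proof. by move=> /fixedqP ha; apply/fixedqP; rewrite fmorphV /= ha. Qed.

Lemma hermE n (M : 'M[F]_n) : is_herm q M -> forall i j, M i j = conjq q (M j i).
Proof. by move=> /eqP hM i j; rewrite -{1}hM mxstarE. Qed.

Lemma hermD n (M N : 'M[F]_n) : is_herm q M -> is_herm q N -> is_herm q (M + N).
Proof. by rewrite /is_herm mxstarD => /eqP-> /eqP->. Qed.

Lemma hermB n (M N : 'M[F]_n) : is_herm q M -> is_herm q N -> is_herm q (M - N).
Proof. by rewrite /is_herm mxstarB => /eqP-> /eqP->. Qed.

Lemma herm_outer n l (x : 'cV[F]_n) :
  l \in fixedq q -> is_herm q (l *: (x *m mxstar q x)).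
Proof. by move/fixedqP => hl; rewrite /is_herm mxstarZ mxstarM mxstarK hl. Qed.

Lemma mulmx_star_eq0 n (x : 'cV[F]_n) : (x *m mxstar q x == 0) = (x == 0).
Proof.
apply/idP/idP => [|/eqP->]; last by rewrite mul0mx.
apply: contraLR => /cV0Pn [i xi0]; apply/matrix0Pn; exists i, i.
by rewrite !mxE big_ord1 mxstarE mulf_eq0 conjq_eq0 orbb.
Qed.

Lemma mxrank_outer n l (x : 'cV[F]_n) :
  l != 0 -> x != 0 -> \rank (l *: (x *m mxstar q x)) = 1%N.
Proof.
move=> l0 x0; apply/eqP; rewrite eqn_leq {1}scalemxAl.
rewrite (leq_trans (mxrankM_maxl _ _)) ?rank_leq_col //.
by rewrite lt0n mxrank_eq0 scaler_eq0 negb_or l0 mulmx_star_eq0.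
Qed.

Lemma herm_rank1 n (M : 'M[F]_n) : is_herm q M -> \rank M = 1%N ->
  exists l (x : 'cV[F]_n), [/\ l \in fixedq q, l != 0, x != 0 & M = l *: (x *m mxstar q x)].
Proof.
move=> hM rkM; have minor := mxrank_le1_minor (eq_leq rkM).
have [i [j Mij0]] : exists i j, M i j != 0 by apply/matrix0Pn; rewrite -mxrank_eq0 rkM.
have Mii0 : M i i != 0.
  apply: contra Mij0 => /eqP Mii0; have := minor i i j j.
  by rewrite Mii0 mul0r (hermE hM j i) => /esym/eqP; rewrite mulf_eq0 conjq_eq0 orbb.
have fixedMii : conjq q (M i i) = M i i by rewrite -hermE.
exists (M i i)^-1, (col i M); split.
- by rewrite fixedqV //; apply/fixedqP.
- by rewrite invr_eq0.
- by apply/cV0Pn; exists i; rewrite mxE.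
apply/matrixP => a b; rewrite !mxE big_ord1 !mxE.
by rewrite -(hermE hM i b) (minor a i i b) mulrC mulfK.
Qed.

Lemma outer_collinear n l m (x y : 'cV[F]_n) : l != 0 -> m != 0 -> x != 0 ->
  (\rank (l *: (x *m mxstar q x) - m *: (y *m mxstar q y))%R <= 1)%N ->
  exists2 c, c \in fixedq q & y *m mxstar q y = c *: (x *m mxstar q x).
Proof.
move=> l0 m0 x0 rk_le1; set P := row_mx x y.
have rkP : (\rank P <= 1)%N.
  rewrite leqNgt; apply/negP => rkP2.
  have freePt : row_free P^T by rewrite /row_free mxrank_tr eqn_leq rank_leq_col.
  set R := col_mx (l *: mxstar q x) (- m *: mxstar q y) : 'M_(1 + 1, n).
  have PR : P *m R = l *: (x *m mxstar q x) - m *: (y *m mxstar q y).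
    by rewrite mul_row_col -!scalemxAr scaleNr.
  have rkR : (\rank (mxstar q P) <= \rank R)%N.
    have -> : mxstar q P = col_mx (mxstar q x) (mxstar q y).
      by rewrite /mxstar map_row_mx tr_row_mx.
    apply: mxrankS; rewrite col_mx_sub.
    have m0' : - m != 0 by rewrite oppr_eq0.
    rewrite -[mxstar q x](scalerK l0) -[mxstar q y](scalerK m0').
    have /andP [xR yR] : (l *: mxstar q x <= R)%MS && (- m *: mxstar q y <= R)%MS.
      by rewrite -col_mx_sub.
    by apply/andP; split; apply: scalemx_sub.
  move: rk_le1; rewrite -PR -mxrank_tr trmx_mul mxrankMfree // mxrank_tr.
  by move=> /(leq_trans rkR); rewrite mxrank_star; lia.
have [c ->] := mxrank_le1_scale rkP x0.
exists (c * conjq q c); first by apply/fixedqP; rewrite rmorphM /= conjqK mulrC.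
by rewrite mxstarZ -scalemxAr -scalemxAl scalerA mulrC.
Qed.

(* Evaluating u1 E u2^* in two ways, E being hermitian, shows
   l1 (u1 y) (u2 y)^* = l2 (u1 y) (u2 y)^*. *)
Lemma rank_drop_unique n (E : 'M[F]_n) (y : 'cV[F]_n) l1 l2 :
  is_herm q E -> l2 \in fixedq q ->
  (\rank (E + l1 *: (y *m mxstar q y))%R < \rank E)%N ->
  (\rank (E + l2 *: (y *m mxstar q y))%R < \rank E)%N -> l1 = l2.
Proof.
move=> /eqP hE /fixedqP hl2; rewrite !scalemxAr.
move=> /rank_drop_witness [u1 [h1 t1]] /rank_drop_witness [u2 [h2 t2]].
have e1 : u1 *m E = - (l1 *: (u1 *m y *m mxstar q y)).
  by apply/eqP; rewrite -addr_eq0 scalemxAr -mulmxA -mulmxDr h1.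
have eR : E *m mxstar q u2 = - (l2 *: (y *m mxstar q (u2 *m y))).
  have e2 : u2 *m E = - (l2 *: (u2 *m y *m mxstar q y)).
    by apply/eqP; rewrite -addr_eq0 scalemxAr -mulmxA -mulmxDr h2.
  by rewrite -{1}hE -mxstarM e2 mxstarN mxstarZ mxstarM mxstarK hl2.
have := mulmxA u1 E (mxstar q u2); rewrite e1 eR mulNmx mulmxN -scalemxAl -scalemxAr.
rewrite -[_ *m mxstar q y *m _]mulmxA -mxstarM mulmxA => /oppr_inj/matrixP/(_ 0 0).
rewrite !mxE big_ord1 mxstarE => /mulIf -> //.
by rewrite mulf_eq0 negb_or t1 conjq_eq0 t2.
Qed.

Definition line n (P Y : 'M[F]_n) : {set 'M[F]_n} := [set P + l *: Y | l in fixedq q].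

Lemma mem_line n (P Y : 'M[F]_n) l : l \in fixedq q -> P + l *: Y \in line P Y.
Proof. exact: imset_f. Qed.

Lemma line_base n (P Y : 'M[F]_n) : P \in line P Y.
Proof. by rewrite -[P in P \in _]addr0 -(scale0r Y) mem_line ?fixedq0. Qed.

Lemma line_shift n (P E Y : 'M[F]_n) : E \in line P Y -> line E Y = line P Y.
Proof.
case/imsetP => l0 fixedl0 ->; apply/setP => M; apply/imsetP/imsetP => -[l fixedl ->].
  by exists (l0 + l); rewrite ?fixedqD // scalerDl addrA.
by exists (l - l0); rewrite ?fixedqB // -addrA -scalerDl [l0 + _]addrC subrK.
Qed.

Lemma card_line n (P Y : 'M[F]_n) : Y != 0 -> #|line P Y| = #|fixedq (F := F) q|.
Proof.
move=> Y0; apply: card_imset => l l' /addrI /eqP.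
by rewrite -subr_eq0 -scalerBl scaler_eq0 (negbTE Y0) orbF subr_eq0 => /eqP.
Qed.

Lemma leaf_setE n (E : 'M[F]_n) (x : 'cV[F]_n) :
  x != 0 -> leaf_set q E x = line E (x *m mxstar q x) :\ E.
Proof.
move=> x0; apply/setP => M; rewrite in_setD1; apply/imsetP/andP => [[l]|[]].
  rewrite in_setD1 => /andP [l0 fixedl] ->; split; last exact: mem_line.
  by rewrite -subr_eq0 addrC addKr scaler_eq0 mulmx_star_eq0 negb_or l0.
move=> ME /imsetP [l fixedl eM]; exists l => //; rewrite in_setD1 fixedl andbT.
by apply: contra_neq ME => l0; rewrite eM l0 scale0r addr0.
Qed.

Lemma mem_leaf_set n (E : 'M[F]_n) (y : 'cV[F]_n) (l : F) :
  l \in fixedq q -> l != 0 -> E + l *: (y *m mxstar q y) \in leaf_set q E y.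
Proof. by move=> fixedl l0; apply: imset_f; rewrite in_setD1 l0. Qed.

Lemma card_leaf_set n (E : 'M[F]_n) (x : 'cV[F]_n) :
  x != 0 -> #|leaf_set q E x| = #|fixedq (F := F) q|.-1.
Proof.
move=> x0; rewrite -(card_line E (Y := x *m mxstar q x)) ?mulmx_star_eq0 // (cardsD1 E (line _ _)).
by rewrite line_base leaf_setE.
Qed.

Lemma line_of_two n (P Y B Z : 'M[F]_n) a b :
  a \in fixedq q -> b \in fixedq q -> a != b ->
  B + a *: Z \in line P Y -> B + b *: Z \in line P Y -> B \in line P Y.
Proof.
move=> fixeda fixedb ab /imsetP [l1 fixedl1 e1] /imsetP [l2 fixedl2 e2].
have ba0 : b - a != 0 by rewrite subr_eq0 eq_sym.
set c := (b - a)^-1 * (l2 - l1).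
have Zc : Z = c *: Y.
  have : (B + b *: Z) - (B + a *: Z) = (P + l2 *: Y) - (P + l1 *: Y) by rewrite e1 e2.
  rewrite !sub_add_scale => /(congr1 ( *:%R (b - a)^-1)).
  by rewrite !scalerA mulVf // scale1r.
apply/imsetP; exists (l1 - a * c).
  by rewrite fixedqB // fixedqM // fixedqM ?fixedqV ?fixedqB.
by rewrite scalerBl addrA -e1 Zc scalerA addrK.
Qed.

Lemma herm_line n (P E : 'M[F]_n) (y : 'cV[F]_n) :
  is_herm q P -> E \in line P (y *m mxstar q y) -> is_herm q E.
Proof. by move=> hP /imsetP [l fixedl ->]; rewrite hermD ?herm_outer. Qed.

Lemma adjacentC n (M N : 'M[F]_n) : adjacent M N = adjacent N M.
Proof. by rewrite /adjacent -mxrank_opp opprB. Qed.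

Lemma adjacent_line n (P : 'M[F]_n) (y : 'cV[F]_n) a b : y != 0 -> a != b ->
  adjacent (P + a *: (y *m mxstar q y)) (P + b *: (y *m mxstar q y)).
Proof.
by move=> y0 ab; rewrite /adjacent sub_add_scale mxrank_outer ?subr_eq0.
Qed.

Lemma adjacent2_in_line n (N1 N2 N : 'M[F]_n) (y : 'cV[F]_n) nu :
  is_herm q N1 -> is_herm q N -> N2 - N1 = nu *: (y *m mxstar q y) -> nu != 0 -> y != 0 ->
  adjacent N N1 -> adjacent N N2 -> N \in line N1 (y *m mxstar q y).
Proof.
move=> hN1 hN eN2 nu0 y0 /eqP rk1 /eqP rk2.
have [mu [z [fixedmu mu0 z0 eN]]] := herm_rank1 (hermB hN hN1) rk1.
have [c fixedc ec] : exists2 c, c \in fixedq q & z *m mxstar q z = c *: (y *m mxstar q y).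
  apply: outer_collinear nu0 mu0 y0 _.
  by rewrite -eN -eN2 opprB addrA subrK -opprB mxrank_opp rk2.
apply/imsetP; exists (mu * c); first exact: fixedqM.
by rewrite -scalerA -ec -eN addrC subrK.
Qed.

Lemma adjacent_leaf_in_line n (A N : 'M[F]_n) (x : 'cV[F]_n) :
  (2 < #|fixedq (F := F) q|)%N -> x != 0 -> is_herm q A -> is_herm q N ->
  {in leaf_set q A x, forall M, adjacent N M} -> N \in line A (x *m mxstar q x).
Proof.
move=> fixed_gt2 x0 hA hN adjN.
have [a [b [fixeda fixedb a0 b0 ab]]] := two_nonzero fixed_gt2.
rewrite -(line_shift (mem_line A (x *m mxstar q x) fixeda)).
apply: (adjacent2_in_line (N2 := A + b *: (x *m mxstar q x)) (nu := b - a)) => //.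
- exact/hermD/herm_outer.
- exact: sub_add_scale.
- by rewrite subr_eq0 eq_sym.
- exact/adjN/mem_leaf_set.
- exact/adjN/mem_leaf_set.
Qed.

Lemma adjacent_leaf_base n (E M : 'M[F]_n) (y : 'cV[F]_n) :
  y != 0 -> M \in leaf_set q E y -> adjacent M E.
Proof.
move=> y0 /imsetP [l]; rewrite in_setD1 => /andP [l0 _] ->.
by rewrite /adjacent addrAC subrr add0r mxrank_outer.
Qed.

Lemma notin_colspace_neq0 n (E : 'M[F]_n) (y : 'cV[F]_n) : ~ in_colspace E y -> y != 0.
Proof. by apply: contra_not_neq => ->; exists 0; rewrite mulmx0. Qed.

Lemma leaf_base_unique n (L : {set 'M[F]_n}) (E B : 'M[F]_n) :
  (2 < #|fixedq (F := F) q|)%N -> is_leaf q L E -> is_leaf q L B -> E = B.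
Proof.
move=> fixed_gt2 [_ [_ [y [/notin_colspace_neq0 y0 ->]]]].
move=> [_ [_ [z [/notin_colspace_neq0 z0 leafEB]]]].
have [a [b [fixeda fixedb a0 b0 ab]]] := two_nonzero fixed_gt2.
have leafB c : c \in fixedq q -> c != 0 -> B + c *: (z *m mxstar q z) \in line E (y *m mxstar q y).
  move=> fixedc c0; have : B + c *: (z *m mxstar q z) \in leaf_set q E y.
    by rewrite leafEB mem_leaf_set.
  by rewrite leaf_setE // => /setD1P [].
have := line_of_two fixeda fixedb ab (leafB a fixeda a0) (leafB b fixedb b0).
apply: contraTeq => BE; rewrite -(setD1K (line_base E _)) in_setU1 eq_sym (negbTE BE) /=.
by rewrite -leaf_setE // leafEB leaf_setE // setD11.
Qed.

Section Preserver.
Variables (n r : nat) (Phi : 'M[F]_n -> 'M[F]_n).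
Hypothesis fixedq_gt2 : (2 < #|fixedq (F := F) q|)%N.
Hypotheses (r_gt0 : (0 < r)%N) (r_le_n : (r <= n)%N).
Hypothesis Phi_into : forall A, A \in hermU q n r -> Phi A \in hermU q n r.
Hypothesis Phi_inj : {in hermU q n r &, injective Phi}.
Hypothesis Phi_onto : forall B, B \in hermU q n r -> exists2 A, A \in hermU q n r & Phi A = B.
Hypothesis Phi_adj : {in hermU q n r &, forall A B, adjacent A B = adjacent (Phi A) (Phi B)}.

Variables (A : 'M[F]_n) (x : 'cV[F]_n).
Hypotheses (hA : is_herm q A) (rkA : \rank A = r.-1) (x0 : x != 0).
Hypothesis leafU : leaf_set q A x \subset hermU q n r.

Local Notation L := (leaf_set q A x).
Local Notation X := (x *m mxstar q x).

Lemma image_leaf_herm_rank (M : 'M[F]_n) : M \in Phi @: L -> is_herm q M /\ \rank M = r.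
Proof. by case/imsetP => M' /(subsetP leafU) /Phi_into + ->; rewrite inE => /andP [-> /eqP]. Qed.

Lemma adjacent_image_leaf c d : c \in fixedq q -> d \in fixedq q -> c != 0 -> d != 0 -> c != d ->
  adjacent (Phi (A + c *: X)) (Phi (A + d *: X)).
Proof.
move=> fixedc fixedd c0 d0 cd.
by rewrite -Phi_adj ?adjacent_line // (subsetP leafU) ?mem_leaf_set.
Qed.

Lemma image_leaf_in_line :
  exists N (y : 'cV[F]_n), [/\ y != 0, is_herm q N & Phi @: L \subset line N (y *m mxstar q y)].
Proof.
have [a [b [fixeda fixedb a0 b0 ab]]] := two_nonzero fixedq_gt2.
have leafA l : l \in fixedq q -> l != 0 -> A + l *: X \in L by apply: mem_leaf_set.
set N1 := Phi (A + a *: X); set N2 := Phi (A + b *: X).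
have [hN1 _] := image_leaf_herm_rank (imset_f Phi (leafA a fixeda a0)).
have [hN2 _] := image_leaf_herm_rank (imset_f Phi (leafA b fixedb b0)).
have /eqP rk21 : adjacent N2 N1 by rewrite adjacent_image_leaf // eq_sym.
have [nu [y [fixednu nu0 y0 eN21]]] := herm_rank1 (hermB hN2 hN1) rk21.
exists N1, y; split => //; apply/subsetP => _ /imsetP [_ /imsetP [c] /setD1P [c0 fixedc] -> ->].
have [->|ca] := eqVneq c a; first exact: line_base.
have [->|cb] := eqVneq c b; first by rewrite -/N2 -[N2](subrK N1) eN21 addrC mem_line.
have [hNc _] := image_leaf_herm_rank (imset_f Phi (leafA c fixedc c0)).
by apply: adjacent2_in_line eN21 nu0 y0 _ _; rewrite // adjacent_image_leaf.
Qed.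

Lemma image_leaf_is_leaf_set :
  exists E (y : 'cV[F]_n), [/\ y != 0, is_herm q E & Phi @: L = leaf_set q E y].
Proof.
have [N [y [y0 hN KN]]] := image_leaf_in_line.
have [|E NE KE] := subset_card_setD1 KN.
  rewrite card_line ?mulmx_star_eq0 // card_in_imset; last first.
    by apply: sub_in2 Phi_inj => M; apply: (subsetP leafU).
  by rewrite card_leaf_set // prednK // (leq_trans _ fixedq_gt2).
exists E, y; split => //; first exact: herm_line NE.
by rewrite (leaf_setE E) // (line_shift NE).
Qed.

Lemma leaf_base_notin_hermU E (y : 'cV[F]_n) :
  y != 0 -> Phi @: L = leaf_set q E y -> E \notin hermU q n r.
Proof.
move=> y0 KE; apply/negP => /Phi_onto [E' E'U PhiE'].
have adjE' : {in L, forall M, adjacent E' M}.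
  move=> M LM; have MU := subsetP leafU M LM.
  by rewrite Phi_adj // PhiE' adjacentC (adjacent_leaf_base y0) // -KE imset_f.
move: (E'U); rewrite inE => /andP [hE' rkE'].
have := adjacent_leaf_in_line fixedq_gt2 x0 hA hE' adjE'.
rewrite -(setD1K (line_base A _)) in_setU1 -leaf_setE // => /orP [/eqP E'A|LE'].
  by move: rkE'; rewrite E'A rkA; lia.
have : E \in leaf_set q E y by rewrite -KE -PhiE' imset_f.
by rewrite leaf_setE // setD11.
Qed.

Lemma rank_image_leaf E (y : 'cV[F]_n) (l : F) : Phi @: L = leaf_set q E y ->
  l \in fixedq q -> l != 0 -> \rank (E + l *: (y *m mxstar q y))%R = r.
Proof.
by move=> KE fixedl l0; apply: (image_leaf_herm_rank _).2; rewrite KE mem_leaf_set.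
Qed.

Lemma rank_leaf_base E (y : 'cV[F]_n) :
  y != 0 -> is_herm q E -> Phi @: L = leaf_set q E y -> \rank E = r.-1.
Proof.
move=> y0 hE KE; have rkK := rank_image_leaf KE.
have [a [b [fixeda fixedb a0 b0 ab]]] := two_nonzero fixedq_gt2.
have rkE_le : (\rank E <= r.+1)%N.
  have := mxrank_le_addB E (E + a *: (y *m mxstar q y)).
  by rewrite rkK // opprD addrA subrr add0r mxrank_opp mxrank_outer // addn1.
have rkE_ge : (r <= \rank E + 1)%N.
  have := mxrank_le_addB (E + a *: (y *m mxstar q y)) E.
  by rewrite rkK // addrAC subrr add0r mxrank_outer.
have rkE_neq_succ : \rank E != r.+1.
  apply/eqP => rkE; move/eqP: ab; apply.
  by apply: (rank_drop_unique (y := y) hE fixedb); rewrite rkE rkK.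
have rkE_neq : \rank E != r.
  by apply: contra (leaf_base_notin_hermU y0 KE) => /eqP rkE; rewrite inE hE rkE eqxx.
lia.
Qed.

Lemma image_leaf_is_leaf : exists E, [/\ is_herm q E, \rank E = r.-1 & is_leaf q (Phi @: L) E].
Proof.
have [E [y [y0 hE KE]]] := image_leaf_is_leaf_set.
have rkE := rank_leaf_base y0 hE KE.
exists E; split => //; split => //; split; first by rewrite rkE; lia.
exists y; split => // -[w yE].
have [a [_ [fixeda _ a0 _ _]]] := two_nonzero fixedq_gt2.
have := mxrank_add_colspace E w (a *: mxstar q y).
by rewrite -yE -scalemxAr (rank_image_leaf KE) // rkE; lia.
Qed.
End Preserver.

End Hermitian.

Theorem lemma2p4 (F : finFieldType) (q n r : nat)
  (hq : (3 <= q)%N) (hF : #|F| = (q ^ 2)%N) (hn : (2 <= n)%N)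
  (hr1 : (1 <= r)%N) (hrn : (r <= n)%N)
  (Phi : 'M[F]_n -> 'M[F]_n)
  (Phi_into : forall A, A \in hermU q n r -> Phi A \in hermU q n r)
  (Phi_inj : {in hermU q n r &, injective Phi})
  (Phi_onto : forall B, B \in hermU q n r -> exists2 A, A \in hermU q n r & Phi A = B)
  (Phi_adj : {in hermU q n r &, forall A B, adjacent A B = adjacent (Phi A) (Phi B)})
  (L : {set 'M[F]_n}) (A : 'M[F]_n)
  (hLU : L \subset hermU q n r)
  (hA : is_herm q A) (hrA : \rank A = r.-1)
  (hL : is_leaf q L A) :
  exists! B : 'M[F]_n,
    is_herm q B /\ \rank B = r.-1 /\ is_leaf q (Phi @: L) B.
Proof.
have fixedq_gt2 := fixedq_card_gt2 hq hF.
have [_ [_ [x [/notin_colspace_neq0 x0 defL]]]] := hL.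
subst L; have [E [hE rkE leafE]] := image_leaf_is_leaf (conjq_additive hF) (conjq_involutive hF) fixedq_gt2 hr1 hrn
  Phi_into Phi_inj Phi_onto Phi_adj hA hrA x0 hLU.
exists E; split => // B [_ [_ leafB]].
exact: (leaf_base_unique (conjq_additive hF) fixedq_gt2 leafE leafB).
Qed.
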